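(* Let $\varepsilon>0$ and let $\mathcal Q$ be either the Laplace gradient mechanism or the projected random sign (PRS) mechanism (both defined below, with parameters $C>0$ and $1\le\hat d\le d$). Consider the algorithm PGC-A3C: there are $N$ agents, agent $n$ having a private environment parameter $\psi_n\in\Psi$ determining its local transition dynamics; the central aggregator holds global parameters $\theta\in\mathbb{R}^d$ (initialized independently of the agents) and a buffer $B$ (initially empty). Each agent $n$ (submitting exactly once; submissions are received in order $n=1,\dots,N$) copies the current global parameters $\theta'\leftarrow\theta$ (which are a function of previously received reports only), runs an episode in its own environment, computes a gradient $\mathbf g_n\in\mathbb{R}^d$ of its empirical loss at $\theta'$ (so the conditional law of $\mathbf g_n$ given everything previously received depends only on $\psi_n$ and $\theta'$), and sends $\tilde{\mathbf g}_n=\mathcal Q(\mathbf g_n)$ computed with fresh randomness. The aggregator adds $\tilde{\mathbf g}_n$ to $B$ and, whenever $|B|$ reaches a fixed maximum size, updates $\theta\leftarrow\theta-\eta\frac1{|B|}\sum_{\tilde{\mathbf g}\in B}\tilde{\mathbf g}$ ($\eta>0$) and clears $B$. Then PGC-A3C satisfies $\varepsilon$-LDP for all local agents: for each $n$, each fixed $(\psi_m)_{m\ne n}$, all $\psi,\psi'\in\Psi$ and every measurable event $E$ concerning all reports $\tilde{\mathbf g}_1,\dots,\tilde{\mathbf g}_N$ and all global parameters computed by the aggregator, $\Pr(E\mid\psi_n=\psi)\le e^{\varepsilon}\Pr(E\mid\psi_n=\psi')$; in particular each report satisfies $\Pr(\tilde{\mathbf g}_n\in G\mid\psi_n=\psi,\tilde{\mathbf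 g}_1,\dots,\tilde{\mathbf g}_{n-1})\le e^{\varepsilon}\Pr(\tilde{\mathbf g}_n\in G\mid\psi_n=\psi',\tilde{\mathbf g}_1,\dots,\tilde{\mathbf g}_{n-1})$ for all measurable $G\subseteq\mathbb{R}^d$.
   Context: Laplace gradient mechanism: $\mathcal Q(\mathbf g)=\bar{\mathbf g}+\mathbf z$ with $\bar{\mathbf g}=\mathbf g/\max\{1,\|\mathbf g\|_1/(C/2)\}$ and $\mathbf z$ having i.i.d. coordinates of density $\frac{\varepsilon}{2C}\exp(-\frac{\varepsilon}{C}|z|)$. PRS mechanism: draw $\mathbf M\in\mathbb{R}^{\hat d\times d}$ with i.i.d. entries $-\sqrt3$ (prob. $1/6$), $0$ (prob. $2/3$), $+\sqrt3$ (prob. $1/6$); set $\mathbf u=\mathbf M\mathbf g$, $\bar u_i=\min\{C,\max\{-C,u_i\}\}$, and independently $\tilde u_i=+C$ with probability $\frac{1}{e^{\varepsilon/\hat d}+1}+\frac{\bar u_i+C}{2C}\frac{e^{\varepsilon/\hat d}-1}{e^{\varepsilon/\hat d}+1}$, else $-C$; output $\mathbf M^\top\tilde{\mathbf u}$. All mechanism randomness is independent of everything else. The specific form of the empirical A3C loss used to compute $\mathbf g_n$ is irrelevant to the claim beyond the stated dependence structure. *)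

From HB Require Import structures.
From mathcomp Require Import all_boot all_order all_algebra.
From mathcomp Require Import all_classical all_reals all_analysis.

Set Implicit Arguments.
Unset Strict Implicit.
Unset Printing Implicit Defensive.

Import Order.TTheory GRing.Theory Num.Theory.
Local Open Scope classical_set_scope.
Local Open Scope ring_scope.

(* Vectors of R^d are represented as d.-tuple R, which carries the product
   (= Borel) sigma-algebra of mathcomp-analysis. *)
Notation vecR R d := (d.-tuple R).

Section Vec.
Variables (R : realType) (d : nat).

Definition vzero : vecR R d := [tuple (0 : R) | i < d].
Definition vsub (a b : vecR R d) : vecR R d := [tuple tnth a i - tnth b i | i < d].
Definition vscale (c : R) (a : vecR R d) : vecR R d := [tuple c * tnth a i | i < d].
Definition vsum (s : seq (vecR R d)) : vecR R d :=
  [tuple \sum_(x <- s) tnth x i | i < d].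
Definition l1norm (a : vecR R d) : R := \sum_(i < d) `|tnth a i|.
End Vec.

Section Laplace.
Variables (R : realType) (d : nat) (eps C : R).

Definition lap_clip (g : vecR R d) : vecR R d :=
  [tuple tnth g i / Num.max 1 (l1norm g / (C / 2)) | i < d].

Definition lap_density (z : R) : R := eps / (2 * C) * expR (- (eps / C * `|z|)).

(* iterated Lebesgue integral against the product of k Laplace densities:
   lap_iter k F = int ... int F [:: z_0; ...; z_{k-1}] prod_i dens(z_i) dz_i *)
Fixpoint lap_iter (k : nat) (F : seq R -> \bar R) : \bar R :=
  match k with
  | 0 => F [::]
  | k'.+1 => (\int[@lebesgue_measure R]_z
                ((lap_density z)%:E * lap_iter k' (fun zs => F (z :: zs))))%E
  end.

(* expectation of F(Q(g)) for the Laplace mechanism Q(g) = gbar + z *)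
Definition laplace_mech_int (g : vecR R d) (F : vecR R d -> \bar R) : \bar R :=
  lap_iter d (fun zs => F [tuple tnth (lap_clip g) i + nth 0 zs i | i < d]).
End Laplace.

Section PRS.
Variables (R : realType) (d dh : nat) (eps C : R).

(* a random matrix M in R^{dh x d} is encoded entrywise by 'I_3:
   0 |-> -sqrt 3 (prob 1/6), 1 |-> 0 (prob 2/3), 2 |-> +sqrt 3 (prob 1/6) *)
Definition prs_code := {ffun 'I_dh * 'I_d -> 'I_3}.

Definition prs_entry_val (c : 'I_3) : R :=
  if val c == 0%N then - Num.sqrt 3 else if val c == 1%N then 0 else Num.sqrt 3.
Definition prs_entry_prob (c : 'I_3) : R :=
  if val c == 1%N then 2 / 3 else 1 / 6.

Definition prs_matrix (M : prs_code) : 'M[R]_(dh, d) :=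
  \matrix_(i, j) prs_entry_val (M (i, j)).
Definition prs_matrix_prob (M : prs_code) : R :=
  \prod_(ij : 'I_dh * 'I_d) prs_entry_prob (M ij).

Definition prs_u (M : prs_code) (g : vecR R d) (i : 'I_dh) : R :=
  \sum_(j < d) prs_matrix M i j * tnth g j.
Definition prs_ubar (M : prs_code) (g : vecR R d) (i : 'I_dh) : R :=
  Num.min C (Num.max (- C) (prs_u M g i)).
(* probability that  utilde_i = +C *)
Definition prs_plus_prob (M : prs_code) (g : vecR R d) (i : 'I_dh) : R :=
  let a := expR (eps / dh%:R) in
  1 / (a + 1) + (prs_ubar M g i + C) / (2 * C) * ((a - 1) / (a + 1)).

(* signs s : true means utilde_i = +C, false means utilde_i = -C *)
Definition prs_sign_prob (M : prs_code) (g : vecR R d) (s : {ffun 'I_dh -> bool}) : R :=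
  \prod_(i < dh) (if s i then prs_plus_prob M g i else 1 - prs_plus_prob M g i).

Definition prs_output (M : prs_code) (s : {ffun 'I_dh -> bool}) : vecR R d :=
  [tuple \sum_(i < dh) prs_matrix M i j * (if s i then C else - C) | j < d].

Definition prs_mech_int (g : vecR R d) (F : vecR R d -> \bar R) : \bar R :=
  (\sum_(M : prs_code) \sum_(s : {ffun 'I_dh -> bool})
     (prs_matrix_prob M * prs_sign_prob M g s)%:E * F (prs_output M s))%E.
End PRS.

Inductive mech_kind := Laplace_mech | PRS_mech of nat .

Definition mech_ok (k : mech_kind) (d : nat) : Prop :=
  match k with Laplace_mech => True | PRS_mech dh => (1 <= dh <= d)%N end.

(* mech_int k eps C g F = E[ F(Q(g)) ], Q computed with fresh randomness *)
Definition mech_int (R : realType) (d : nat) (k : mech_kind) (eps C : R)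
  (g : vecR R d) (F : vecR R d -> \bar R) : \bar R :=
  match k with
  | Laplace_mech => laplace_mech_int eps C g F
  | PRS_mech dh => prs_mech_int dh eps C g F
  end.

Section PGCA3C.
Variables (R : realType) (d : nat) (eps C eta : R) (Bmax : nat) (k : mech_kind).
Variables (Psi : Type) (G : Psi -> R.-pker (vecR R d) ~> (vecR R d)).

Fixpoint aggregate (theta : vecR R d) (buf hist : seq (vecR R d)) : vecR R d :=
  match hist with
  | [::] => theta
  | y :: h =>
      let buf' := rcons buf y in
      if size buf' == Bmax
      then aggregate (vsub theta (vscale (eta / (size buf')%:R) (vsum buf'))) [::] h
      else aggregate theta buf' h
  end.

Definition global_params (theta0 : vecR R d) (hist : seq (vecR R d)) : vecR R d :=
  aggregate theta0 [::] hist.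

(* law of the report of an agent with environment parameter psi, copying
   global parameters theta' : expectation of F(Q(g)) with g ~ G psi theta' *)
Definition report_int (psi : Psi) (theta' : vecR R d) (F : vecR R d -> \bar R)
  : \bar R :=
  (\int[G psi theta']_g mech_int k eps C g F)%E.

Definition report_prob (psi : Psi) (theta' : vecR R d) (A : set (vecR R d)) : \bar R :=
  report_int psi theta' (fun y => (\1_A y)%:E).

(* sequential run of the remaining m agents, starting from the history hist
   of already received reports; agent with 0-based index (size hist) has
   environment parameter psis (size hist). *)
Fixpoint run_int (psis : nat -> Psi) (m : nat) (theta0 : vecR R d)
  (hist : seq (vecR R d)) (F : seq (vecR R d) -> \bar R) : \bar R :=
  match m with
  | 0 => F hist
  | m'.+1 => report_int (psis (size hist)) (global_params theta0 hist)
               (fun y => run_int psis m' theta0 (rcons hist y) F)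
  end.

(* probability of an event E on (theta0, (report_1, ..., report_N)) *)
Definition pgc_prob (N : nat) (P0 : probability (vecR R d) R) (psis : nat -> Psi)
  (E : set (vecR R d * N.-tuple (vecR R d))) : \bar R :=
  (\int[P0]_theta0
     run_int psis N theta0 [::]
       (fun h => (\1_E (theta0, (insubd (nseq_tuple N (vzero R d)) h : N.-tuple _)))%:E))%E.
End PGCA3C.

Definition set_psi (Psi : Type) (psis : nat -> Psi) (n : nat) (psi : Psi) : nat -> Psi :=
  fun m => if m == n then psi else psis m.

From HB Require Import structures.
From mathcomp Require Import all_boot all_order all_algebra.
From mathcomp Require Import all_classical all_reals all_analysis.
From mathcomp Require Import lra.

Import Order.TTheory GRing.Theory Num.Theory.
Local Open Scope classical_set_scope.
Local Open Scope ring_scope.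

(* Each report is the output of the mechanism on a gradient drawn from a law
   that depends only on the agent's environment and the current parameters.
   Whatever the two input gradients, the output laws of both mechanisms are
   within a factor e^eps of each other: clipped Laplace inputs are at
   l1-distance at most C, and the Laplace density changes by at most
   exp(eps/C * distance) under such a shift; each of the dh independent PRS
   signs has probability in [1/(a+1), a/(a+1)] with a = e^(eps/dh), whatever
   the input.  Averaging over the gradient keeps the factor e^eps for agent n
   at any history.  The reports of the other agents have conditional laws that
   do not involve psi_n, and the integral against them is monotone and
   positively homogeneous, so the factor propagates to every event on the
   whole transcript. *)

(* The integrands below, built from whole runs of the protocol, are never shown
   to be measurable, so comparisons go through the supremum of the integrals of
   the simple functions below the integrand. *)
Section integral_comparison.
Local Open Scope ereal_scope.
Context {d} {T : measurableType d} {R : realType}.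
Implicit Types (mu nu : {measure set T -> \bar R}) (f g : T -> \bar R).
Import HBNNSimple.

Lemma ge0_le_integral_scale mu f g (c : R) : (0 < c)%R ->
  (forall x, 0 <= f x) -> (forall x, 0 <= g x) -> (forall x, f x <= c%:E * g x) ->
  \int[mu]_x f x <= c%:E * \int[mu]_x g x.
Proof.
move=> c_gt0 f0 g0 fg; rewrite !ge0_integralTE //.
apply: ge_ereal_sup => _ [h hf <-].
have cV_ge0 : (0 <= c^-1)%R by rewrite invr_ge0 ltW.
have -> : sintegral mu h = c%:E * sintegral mu (scale_nnsfun h cV_ge0).
  rewrite sintegralrM muleA -EFinM mulfV ?gt_eqF // mul1e.
  by apply: eq_sintegral => x.
apply: lee_wpmul2l; first by rewrite lee_fin ltW.
apply: ereal_sup_ubound; exists (scale_nnsfun h cV_ge0) => // x /=.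
have := le_trans (hf x) (fg x); have := g0 x.
case: (g x) => [r| |] //= _; rewrite ?leey // !lee_fin => hr.
by rewrite ler_pdivrMl.
Qed.

Lemma prob_integral_le_ratio mu nu f (c : R) : mu setT = 1 -> nu setT = 1 ->
  (0 < c)%R -> (forall x, 0 <= f x) -> (forall x y, f x <= c%:E * f y) ->
  \int[mu]_x f x <= c%:E * \int[nu]_x f x.
Proof.
move=> mu1 nu1 c_gt0 f0 fxy.
have le_f y : \int[mu]_x f x <= c%:E * f y.
  apply: le_trans (ge0_le_integral_scale mu f (cst (f y)) _ c_gt0 f0 (fun=> f0 y) (fxy^~ y)) _.
  by rewrite integral_cst // mu1 mule1.
have int_ge0 : 0 <= \int[mu]_x f x by apply: integral_ge0 => x _.
have -> : \int[mu]_x f x = \int[nu]_x cst (\int[mu]_x f x) x.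
  by rewrite integral_cst // nu1 mule1.
exact: ge0_le_integral_scale c_gt0 (fun=> int_ge0) f0 le_f.
Qed.

Section measure_preserving.
Variables (mu : {measure set T -> \bar R}) (phi : T -> T).
Hypotheses (mphi : measurable_fun setT phi)
  (mu_phi : forall A, measurable A -> mu (phi @^-1` A) = mu A).

Section comp_nnsfun.
Variable h : {nnsfun T >-> R}.
Definition h_phi := h \o phi.
Let mcomp : measurable_fun setT h_phi.
Proof. exact: measurableT_comp. Qed.
Let fcomp : finite_set (range h_phi).
Proof. by apply: sub_finite_set (fimfunP h) => _ [x _ <-]; exists (phi x). Qed.
Let comp_ge0 x : (0 <= h_phi x)%R.
Proof. exact: fun_ge0. Qed.
HB.instance Definition _ := isMeasurableFun.Build _ _ _ _ h_phi mcomp.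
HB.instance Definition _ := FiniteImage.Build _ _ h_phi fcomp.
HB.instance Definition _ := isNonNegFun.Build _ _ h_phi comp_ge0.
Definition comp_nnsfun : {nnsfun T >-> R} := h_phi.

Lemma sintegral_comp_nnsfun : sintegral mu comp_nnsfun = sintegral mu h.
Proof.
rewrite !sintegralET; apply: eq_fsbigr => y _; congr (_ * _).
by apply: mu_phi; exact: measurable_sfunP.
Qed.
End comp_nnsfun.

Lemma ge0_le_integral_comp f : (forall x, 0 <= f x) ->
  \int[mu]_x f x <= \int[mu]_x f (phi x).
Proof.
move=> f0; rewrite !ge0_integralTE //.
apply: ge_ereal_sup => _ [h hf <-]; rewrite -sintegral_comp_nnsfun.
by apply: ereal_sup_ubound; exists (comp_nnsfun h) => // x; exact: hf.
Qed.
End measure_preserving.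
End integral_comparison.

Section lebesgue_shift.
Context {R : realType}.
Local Notation mu := (@lebesgue_measure R).
Local Notation LT := (measurableTypeR R).

Let mshift (t : R) : measurable_fun [set: LT] (fun x : LT => (x : R) + t : LT).
Proof. exact: measurable_realfun.measurable_funD. Qed.

Lemma lebesgue_measure_shift (t : R) (A : set R) : measurable A ->
  mu ((fun x => x + t) @^-1` A) = mu A.
Proof.
(* The measure instance of a pushforward depends on the measurability proof,
   hence cannot be inferred. *)
pose nu : {measure set _ -> \bar R} :=
  @measure_function_pushforward__canonical__measure_function_Measure
    _ _ _ _ R mu _ (mshift t).
move=> mA; rewrite [RHS](lebesgue_measure_unique (mu := nu)) // => _ [[a b] _ <-].
rewrite /= /pushforward (_ : _ @^-1` _ = `]a - t, b - t]%classic); last first.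
  by apply/seteqP; split => x /=; rewrite !in_itv /= ltrBlDr lerBrDr.
rewrite !lebesgue_measure_itv /= !lte_fin ltrD2r.
by case: ifP => // _; rewrite -!EFinD; congr (_%:E); lra.
Qed.

Lemma ge0_integral_shift (f : R -> \bar R) (t : R) : (forall x, (0 <= f x)%E) ->
  (\int[mu]_x f (x + t)%R = \int[mu]_x f x)%E.
Proof.
have le_shift g s : (forall x, 0 <= g x)%E -> (\int[mu]_x g x <= \int[mu]_x g (x + s)%R)%E.
  exact: ge0_le_integral_comp (mshift s) (@lebesgue_measure_shift s) g.
move=> f0; apply/le_anti/andP; split; last exact: le_shift.
apply: le_trans (le_shift _ (- t) (fun x => f0 (x + t)%R)) _.
by under eq_integral do rewrite addrNK.
Qed.
End lebesgue_shift.

Section laplace_noise.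
Context {R : realType} {eps C : R}.
Hypotheses (eps_ge0 : 0 <= eps) (C_gt0 : 0 < C).
Local Notation dens := (lap_density eps C).
Local Notation iter := (lap_iter eps C).

Lemma lap_density_ge0 z : 0 <= dens z.
Proof. by rewrite /lap_density mulr_ge0 ?expR_ge0 // divr_ge0 // mulr_ge0 // ltW. Qed.

Lemma lap_density_shift_le a b w :
  dens (w - a) <= expR (eps / C * `|a - b|) * dens (w - b).
Proof.
rewrite /lap_density mulrCA; apply: ler_wpM2l; first by rewrite divr_ge0 // mulr_ge0 // ltW.
rewrite -expRD ler_expR.
have epsC_ge0 : 0 <= eps / C by rewrite divr_ge0 // ltW.
have : `|w - b| <= `|w - a| + `|a - b| by rewrite -[w - b](subrKA a) ler_normD.
by move/(ler_wpM2l epsC_ge0); rewrite mulrDr; lra.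
Qed.

Local Open Scope ereal_scope.

Lemma lap_integral_shift_le (J : R -> \bar R) (a b : R) : (forall w, 0 <= J w) ->
  \int[lebesgue_measure]_z ((dens z)%:E * J (a + z)%R) <=
  (expR (eps / C * `|a - b|))%:E * \int[lebesgue_measure]_z ((dens z)%:E * J (b + z)%R).
Proof.
move=> J0; have dJ_ge0 c w : 0 <= (dens (w - c))%:E * J w.
  by rewrite mule_ge0 ?lee_fin ?lap_density_ge0.
have centerE c : \int[lebesgue_measure]_z ((dens z)%:E * J (c + z)%R) =
                 \int[lebesgue_measure]_w ((dens (w - c))%:E * J w).
  rewrite -(ge0_integral_shift _ c (dJ_ge0 c)).
  by apply: eq_integral => z _; rewrite addrK addrC.
rewrite !centerE; apply: ge0_le_integral_scale => // [|w]; first exact: expR_gt0.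
by rewrite muleA -EFinM lee_wpmul2r // lee_fin lap_density_shift_le.
Qed.

Lemma lap_iter_ge0 k (F : seq R -> \bar R) : (forall zs, 0 <= F zs) -> 0 <= iter k F.
Proof.
elim: k F => [|k IH] F F0 //=.
by apply: integral_ge0 => z _; rewrite mule_ge0 ?lee_fin ?lap_density_ge0 ?IH.
Qed.

Lemma lap_iter_le_scale k (F1 F2 : seq R -> \bar R) (c : R) : (0 < c)%R ->
  (forall zs, 0 <= F1 zs) -> (forall zs, 0 <= F2 zs) ->
  (forall zs, F1 zs <= c%:E * F2 zs) -> iter k F1 <= c%:E * iter k F2.
Proof.
elim: k F1 F2 => [|k IH] F1 F2 c_gt0 F10 F20 F12 //=.
apply: ge0_le_integral_scale => // z.
- by rewrite mule_ge0 ?lee_fin ?lap_density_ge0 ?lap_iter_ge0.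
- by rewrite mule_ge0 ?lee_fin ?lap_density_ge0 ?lap_iter_ge0.
by rewrite muleCA lee_wpmul2l ?lee_fin ?lap_density_ge0 ?IH.
Qed.

Lemma lap_iter_shift_le k (F : (nat -> R) -> \bar R) (a b : nat -> R) :
  (forall v, 0 <= F v) -> (forall i, (k <= i)%N -> a i = b i) ->
  iter k (fun zs => F (fun i => a i + nth 0 zs i)%R) <=
  (expR (eps / C * \sum_(i < k) `|a i - b i|))%:E *
    iter k (fun zs => F (fun i => b i + nth 0 zs i)%R).
Proof.
elim: k F a b => [|k IH] F a b F0 ab /=.
  have -> : a = b by apply: funext => i; exact: ab.
  by rewrite big_ord0 mulr0 expR0 mul1e.
pose cons_fun (w : R) (v : nat -> R) i := if i is j.+1 then v j else w.
have consE (c : nat -> R) z : (fun zs => F (fun i => c i + nth 0 (z :: zs) i)%R) =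
    (fun zs => F (cons_fun (c 0%N + z)%R (fun j => c j.+1 + nth 0 zs j)%R)).
  by apply: funext => zs; congr F; apply: funext => -[|i].
pose J w := iter k (fun zs => F (cons_fun w (fun j => b j.+1 + nth 0 zs j)%R)).
have J_ge0 w : 0 <= J w by apply: lap_iter_ge0.
rewrite big_ord_recl mulrDr expRD mulrC EFinM -muleA.
under eq_integral do rewrite consE.
under [in leRHS]eq_integral do rewrite consE.
apply: le_trans (ge0_le_integral_scale _ _
  (fun z : measurableTypeR R => (dens z)%:E * J (a 0%N + z)%R) _ (expR_gt0 _) _ _ _) _.
- by move=> z; rewrite mule_ge0 ?lee_fin ?lap_density_ge0 ?lap_iter_ge0.
- by move=> z; rewrite mule_ge0 ?lee_fin ?lap_density_ge0.
- move=> z; rewrite muleCA lee_wpmul2l ?lee_fin ?lap_density_ge0 //.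
  by apply: (IH (F \o cons_fun _) (a \o S) (b \o S)) => [v | i ki]; [exact: F0 | exact: ab].
by rewrite lee_wpmul2l ?lee_fin ?expR_ge0 ?lap_integral_shift_le.
Qed.
End laplace_noise.

Section laplace_mechanism.
Context {R : realType} {d : nat} (eps C : R).
Hypotheses (eps_ge0 : 0 <= eps) (C_gt0 : 0 < C).

Lemma l1norm_lap_clip_le (g : d.-tuple R) : l1norm (lap_clip C g) <= C / 2.
Proof.
set m := Num.max 1 (l1norm g / (C / 2)).
have m_gt0 : 0 < m by rewrite lt_max ltr01.
have -> : l1norm (lap_clip C g) = l1norm g / m.
  rewrite /l1norm mulr_suml; apply: eq_bigr => i _.
  by rewrite tnth_mktuple normrM normfV (gtr0_norm m_gt0).
have C2_gt0 : 0 < C / 2 by rewrite divr_gt0.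
rewrite ler_pdivrMr // mulrC -ler_pdivrMr //.
by rewrite le_max lexx orbT.
Qed.

Lemma laplace_mech_int_ldp (g g' : d.-tuple R) (F : d.-tuple R -> \bar R) :
  (forall y, (0 <= F y)%E) ->
  (laplace_mech_int eps C g F <= (expR eps)%:E * laplace_mech_int eps C g' F)%E.
Proof.
move=> F0; pose a i := nth 0 (lap_clip C g : seq R) i.
pose b i := nth 0 (lap_clip C g' : seq R) i.
pose Fv (v : nat -> R) := F [tuple v i | i < d].
have mechE (h : d.-tuple R) : laplace_mech_int eps C h F =
    lap_iter eps C d (fun zs => Fv (fun i => nth 0 (lap_clip C h : seq R) i + nth 0 zs i)).
  rewrite /laplace_mech_int /Fv; congr lap_iter; apply: funext => zs; congr F.
  by apply: eq_mktuple => i; rewrite (tnth_nth 0).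
rewrite !mechE; apply: le_trans (lap_iter_shift_le eps_ge0 C_gt0 _ Fv a b _ _) _.
- by move=> v; exact: F0.
- by move=> i di; rewrite /a /b !nth_default // size_tuple.
apply: lee_wpmul2r; first by apply: lap_iter_ge0 => // zs; exact: F0.
have dist_le : \sum_(i < d) `|a i - b i| <= C.
  apply: le_trans (_ : l1norm (lap_clip C g) + l1norm (lap_clip C g') <= C).
    rewrite /l1norm -big_split /=; apply: ler_sum => i _.
    by rewrite /a /b -!(tnth_nth 0) ler_normB.
  by have := l1norm_lap_clip_le g; have := l1norm_lap_clip_le g'; lra.
have epsC_ge0 : 0 <= eps / C by rewrite divr_ge0 // ltW.
rewrite lee_fin ler_expR (le_trans (ler_wpM2l epsC_ge0 dist_le)) //.
by rewrite divfK // lt0r_neq0.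
Qed.
End laplace_mechanism.

Section finite_comparison.
Context {R : realType}.

Lemma ler_prod_scale n (x y : 'I_n -> R) (c : R) :
  (forall i, 0 <= x i) -> (forall i, x i <= c * y i) ->
  \prod_(i < n) x i <= c ^+ n * \prod_(i < n) y i.
Proof.
move=> x_ge0 xy; rewrite -[in c ^+ n](card_ord n) -prodr_const -big_split /=.
by apply: ler_prod => i _; rewrite x_ge0 xy.
Qed.

Local Open Scope ereal_scope.

Lemma lee_sum_scale (I : finType) (x y : I -> \bar R) (c : R) : (0 <= c)%R ->
  (forall i, 0 <= y i) -> (forall i, x i <= c%:E * y i) ->
  \sum_(i : I) x i <= c%:E * \sum_(i : I) y i.
Proof. by move=> c_ge0 y_ge0 xy; rewrite ge0_sume_distrr //; exact: lee_sum. Qed.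
End finite_comparison.

(* Randomized response: [prs_plus_prob] unfolds to
   [rr_plus_prob (expR (eps / dh)) ((ubar + C) / (2 * C))]. *)
Definition rr_plus_prob {R : realType} (a t : R) := 1 / (a + 1) + t * ((a - 1) / (a + 1)).

Lemma rr_prob_bounds {R : realType} (a t : R) (b : bool) : 1 <= a -> 0 <= t <= 1 ->
  (a + 1)^-1 <= (if b then rr_plus_prob a t else 1 - rr_plus_prob a t) <= a / (a + 1).
Proof.
move=> a_ge1 /andP[t_ge0 t_le1]; rewrite /rr_plus_prob.
set u := (a + 1)^-1; have u_gt0 : 0 < u by rewrite invr_gt0; lra.
have uE : (a + 1) * u = 1 by rewrite mulfV //; lra.
rewrite div1r -/u mulrBl mul1r.
have tau_ge0 : 0 <= t * (a * u - u) by rewrite mulr_ge0 // subr_ge0 ler_peMl // ltW.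
have tau_le : t * (a * u - u) <= a * u - u.
  by rewrite ler_piMl // subr_ge0 ler_peMl // ltW.
by rewrite mulrDl mul1r in uE; case: b; apply/andP; split; lra.
Qed.

Section prs_mechanism.
Context {R : realType} {d dh : nat} (eps C : R).
Hypotheses (eps_ge0 : 0 <= eps) (C_gt0 : 0 < C).
Implicit Types (M : prs_code d dh) (g : d.-tuple R).
Local Notation a := (expR (eps / dh%:R)).
Local Notation sign_factor M g i b :=
  (if b then prs_plus_prob eps C M g i else 1 - prs_plus_prob eps C M g i).

Lemma prs_ubar_bounds M g i : - C <= prs_ubar C M g i <= C.
Proof.
have NC_le_C : - C <= C by have := C_gt0; lra.
by rewrite /prs_ubar le_min le_max lexx NC_le_C ge_min lexx.
Qed.

Lemma prs_sign_factor_bounds M g i (b : bool) :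
  (a + 1)^-1 <= sign_factor M g i b <= a / (a + 1).
Proof.
apply: rr_prob_bounds; first by rewrite -expR0 ler_expR divr_ge0.
have /andP[ub_ge ub_le] := prs_ubar_bounds M g i.
have C2_gt0 : 0 < 2 * C by rewrite mulr_gt0.
apply/andP; split; first by apply: divr_ge0; [lra | exact: ltW].
by rewrite ler_pdivrMr // mul1r; lra.
Qed.

Lemma prs_sign_factor_ge0 M g i (b : bool) : 0 <= sign_factor M g i b.
Proof.
have /andP[+ _] := prs_sign_factor_bounds M g i b.
by apply: le_trans; rewrite invr_ge0 addr_ge0 ?expR_ge0.
Qed.

Lemma prs_sign_prob_ge0 M g s : 0 <= prs_sign_prob eps C M g s.
Proof. by apply: prodr_ge0 => i _; exact: prs_sign_factor_ge0. Qed.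

Lemma prs_sign_prob_ratio (dh_gt0 : (0 < dh)%N) M g g' s :
  prs_sign_prob eps C M g s <= expR eps * prs_sign_prob eps C M g' s.
Proof.
have -> : expR eps = a ^+ dh by rewrite -expRM_natr divfK // pnatr_eq0 -lt0n.
apply: ler_prod_scale => i; first exact: prs_sign_factor_ge0.
have /andP[_ le_au] := prs_sign_factor_bounds M g i (s i).
have /andP[u_le _] := prs_sign_factor_bounds M g' i (s i).
exact: le_trans le_au (ler_wpM2l (expR_ge0 _) u_le).
Qed.

Lemma prs_matrix_prob_ge0 M : 0 <= prs_matrix_prob R M.
Proof. by apply: prodr_ge0 => ij _; rewrite /prs_entry_prob; case: ifP. Qed.

Local Open Scope ereal_scope.

Lemma prs_weight_ge0 M g s : 0 <= (prs_matrix_prob R M * prs_sign_prob eps C M g s)%:E.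
Proof. by rewrite lee_fin mulr_ge0 ?prs_matrix_prob_ge0 ?prs_sign_prob_ge0. Qed.

Lemma prs_mech_int_ge0 g F : (forall y, 0 <= F y) -> 0 <= prs_mech_int dh eps C g F.
Proof.
move=> F0; apply: sume_ge0 => M _; apply: sume_ge0 => s _.
by rewrite mule_ge0 ?prs_weight_ge0.
Qed.

Lemma prs_mech_int_le_scale g F1 F2 (c : R) : (0 <= c)%R ->
  (forall y, 0 <= F2 y) -> (forall y, F1 y <= c%:E * F2 y) ->
  prs_mech_int dh eps C g F1 <= c%:E * prs_mech_int dh eps C g F2.
Proof.
move=> c_ge0 F20 F12; apply: lee_sum_scale => // M.
  by apply: sume_ge0 => s _; rewrite mule_ge0 ?prs_weight_ge0.
apply: lee_sum_scale => // [s|s]; first by rewrite mule_ge0 ?prs_weight_ge0.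
by rewrite muleCA lee_wpmul2l ?prs_weight_ge0.
Qed.

Lemma prs_mech_int_ldp (dh_gt0 : (0 < dh)%N) g g' F : (forall y, 0 <= F y) ->
  prs_mech_int dh eps C g F <= (expR eps)%:E * prs_mech_int dh eps C g' F.
Proof.
move=> F0; apply: lee_sum_scale => [||M]; first exact: expR_ge0.
  by move=> M; apply: sume_ge0 => s _; rewrite mule_ge0 ?prs_weight_ge0.
apply: lee_sum_scale => [||s]; first exact: expR_ge0.
  by move=> s; rewrite mule_ge0 ?prs_weight_ge0.
rewrite muleA -EFinM lee_wpmul2r // lee_fin mulrCA.
by apply: ler_wpM2l; [exact: prs_matrix_prob_ge0 | exact: prs_sign_prob_ratio].
Qed.
End prs_mechanism.

Section set_psi.
Context {Psi : Type} (psis : nat -> Psi) (n : nat) (psi : Psi).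

Lemma set_psi_eq : set_psi psis n psi n = psi.
Proof. by rewrite /set_psi eqxx. Qed.

Lemma set_psi_neq m : m != n -> set_psi psis n psi m = psis m.
Proof. by rewrite /set_psi => /negPf ->. Qed.
End set_psi.

Section pgc_a3c.
Context {R : realType} {d : nat} (eps C eta : R) (Bmax : nat) (k : mech_kind).
Context {Psi : Type} (G : Psi -> R.-pker (d.-tuple R) ~> (d.-tuple R)).
Hypotheses (eps_ge0 : 0 <= eps) (C_gt0 : 0 < C) (k_ok : mech_ok k d).
Local Open Scope ereal_scope.
Implicit Types (g : d.-tuple R) (F : d.-tuple R -> \bar R).

Lemma mech_int_ge0 g F : (forall y, 0 <= F y) -> 0 <= mech_int k eps C g F.
Proof.
case: k => [|dh] F0 /=; last exact: prs_mech_int_ge0.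
by apply: lap_iter_ge0 => // zs; exact: F0.
Qed.

Lemma mech_int_le_scale g F1 F2 (c : R) : (0 < c)%R ->
  (forall y, 0 <= F1 y) -> (forall y, 0 <= F2 y) -> (forall y, F1 y <= c%:E * F2 y) ->
  mech_int k eps C g F1 <= c%:E * mech_int k eps C g F2.
Proof.
case: k => [|dh] c_gt0 F10 F20 F12 /=; last exact: prs_mech_int_le_scale (ltW c_gt0) F20 F12.
exact: lap_iter_le_scale.
Qed.

Lemma mech_int_ldp g g' F : (forall y, 0 <= F y) ->
  mech_int k eps C g F <= (expR eps)%:E * mech_int k eps C g' F.
Proof.
case: k k_ok => [_|dh /andP[dh_gt0 _]] F0 /=; first exact: laplace_mech_int_ldp.
exact: prs_mech_int_ldp.
Qed.

Lemma report_int_ge0 psi theta F : (forall y, 0 <= F y) ->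
  0 <= report_int eps C k G psi theta F.
Proof. by move=> F0; apply: integral_ge0 => g _; exact: mech_int_ge0. Qed.

Lemma report_int_le_scale psi theta F1 F2 (c : R) : (0 < c)%R ->
  (forall y, 0 <= F1 y) -> (forall y, 0 <= F2 y) -> (forall y, F1 y <= c%:E * F2 y) ->
  report_int eps C k G psi theta F1 <= c%:E * report_int eps C k G psi theta F2.
Proof.
move=> c_gt0 F10 F20 F12.
apply: (ge0_le_integral_scale _ (fun g => mech_int k eps C g F1)
  (fun g => mech_int k eps C g F2) _ c_gt0) => g.
- exact: mech_int_ge0.
- exact: mech_int_ge0.
- exact: mech_int_le_scale.
Qed.

Lemma report_int_ldp psi psi' theta F : (forall y, 0 <= F y) ->
  report_int eps C k G psi theta F <= (expR eps)%:E * report_int eps C k G psi' theta F.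
Proof.
move=> F0; apply: (prob_integral_le_ratio _ _ (fun g => mech_int k eps C g F) _ _ _ (expR_gt0 eps)).
- exact: prob_kernel.
- exact: prob_kernel.
- by move=> g; exact: mech_int_ge0.
- by move=> g g'; exact: mech_int_ldp.
Qed.

Local Notation run := (run_int eps C eta Bmax k G).

Lemma run_int_ge0 psis m theta0 hist (F : seq (d.-tuple R) -> \bar R) :
  (forall h, 0 <= F h) -> 0 <= run psis m theta0 hist F.
Proof.
move=> F0; elim: m hist => [|m IH] hist /=; first exact: F0.
by apply: report_int_ge0 => y; exact: IH.
Qed.

Lemma eq_run_int psis1 psis2 m theta0 hist (F : seq (d.-tuple R) -> \bar R) :
  (forall j, (size hist <= j)%N -> psis1 j = psis2 j) ->
  run psis1 m theta0 hist F = run psis2 m theta0 hist F.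
Proof.
elim: m hist => [|m IH] hist eq_psis //=.
rewrite eq_psis //; congr report_int; apply: funext => y; apply: IH => j.
by rewrite size_rcons => /ltnW; exact: eq_psis.
Qed.

Lemma run_int_ldp psis n psi psi' m theta0 hist (F : seq (d.-tuple R) -> \bar R) :
  (forall h, 0 <= F h) -> (size hist <= n)%N ->
  run (set_psi psis n psi) m theta0 hist F <=
  (expR eps)%:E * run (set_psi psis n psi') m theta0 hist F.
Proof.
move=> F0; have run0 psis' hist' m' : 0 <= run psis' m' theta0 hist' F.
  exact: run_int_ge0.
elim: m hist => [|m IH] hist /=.
  by rewrite lee_pemull ?F0 // lee_fin -expR0 ler_expR.
rewrite leq_eqVlt => /orP[/eqP hist_n|hist_lt].
  rewrite hist_n !set_psi_eq.
  have -> : (fun y => run (set_psi psis n psi) m theta0 (rcons hist y) F) =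
            (fun y => run (set_psi psis n psi') m theta0 (rcons hist y) F).
    apply: funext => y; apply: eq_run_int => j; rewrite size_rcons hist_n => n_lt_j.
    by rewrite !set_psi_neq // gtn_eqF.
  exact: report_int_ldp.
rewrite !set_psi_neq ?ltn_eqF //.
apply: report_int_le_scale => // [|y]; first exact: expR_gt0.
by apply: IH; rewrite size_rcons.
Qed.
End pgc_a3c.

Theorem theorem3 (R : realType) (d N Bmax : nat) (eps C eta : R) (k : mech_kind)
  (Psi : Type) (G : Psi -> R.-pker (d.-tuple R) ~> (d.-tuple R))
  (P0 : probability (d.-tuple R) R) :
  0 < eps -> 0 < C -> 0 < eta -> (0 < Bmax)%N -> mech_ok k d ->
  (forall (n : nat) (psis : nat -> Psi) (psi psi' : Psi)
          (E : set (d.-tuple R * N.-tuple (d.-tuple R))),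
     (n < N)%N -> measurable E ->
     (@pgc_prob R d eps C eta Bmax k Psi G N P0 (set_psi psis n psi) E
      <= (expR eps)%:E * @pgc_prob R d eps C eta Bmax k Psi G N P0 (set_psi psis n psi') E)%E)
  /\
  (forall (n : nat) (psi psi' : Psi) (theta0 : d.-tuple R)
          (hist : seq (d.-tuple R)) (A : set (d.-tuple R)),
     (n < N)%N -> size hist = n -> measurable A ->
     (report_prob eps C k G psi (global_params eta Bmax theta0 hist) A
      <= (expR eps)%:E * report_prob eps C k G psi' (global_params eta Bmax theta0 hist) A)%E).
Proof.
move=> eps_gt0 C_gt0 _ _ k_ok; have eps_ge0 := ltW eps_gt0; split.
- move=> n psis psi psi' E _ _; rewrite /pgc_prob.
  pose ind (theta0 : d.-tuple R) (h : seq (d.-tuple R)) : \bar R :=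
    (\1_E (theta0, insubd (nseq_tuple N (vzero R d)) h : N.-tuple _))%:E.
  have ind_ge0 theta0 h : (0 <= ind theta0 h)%E by rewrite lee_fin indicE ler0n.
  apply: (ge0_le_integral_scale P0
    (fun theta0 => run_int eps C eta Bmax k G (set_psi psis n psi) N theta0 [::] (ind theta0))
    (fun theta0 => run_int eps C eta Bmax k G (set_psi psis n psi') N theta0 [::] (ind theta0))
    _ (expR_gt0 eps)) => theta0.
  + exact: run_int_ge0.
  + exact: run_int_ge0.
  + exact: run_int_ldp.
- move=> n psi psi' theta0 hist A _ _ _.
  by apply: report_int_ldp => // y; rewrite lee_fin indicE ler0n.
Qed.
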